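(* Let $n,B$ be powers of $2$ with $2\le B\le n$, let $F\ge2$ be an even integer, $\epsilon=(1/4)^{F-1}$, and let $\hat G\in\mathbb{R}^n$ be a flat filter with $B$ buckets and sharpness $F$. Let $\sigma$ be uniformly random among the odd integers in $[n]$ and $b$ independently uniform in $[n]$. Then for all $f\neq f'$ in $[n]$ and all $\lambda\ge0$, \[\mathbb{E}\exp\bigl(\lambda\hat G_{o_{f,\sigma,b}(f')}\bigr)\le M(\lambda):=e^{\lambda\epsilon}\Bigl[\Bigl(\frac2B+\frac1n\Bigr)\bigl(e^{\lambda(1-\epsilon)}-1\bigr)+1\Bigr].\]
   Context: A flat filter with $B$ buckets and sharpness $F$ is a sequence $\hat G\in\mathbb{R}^n$ indexed by $\mathbb{Z}_n$ (with representatives $f\in\{-n/2,\dots,n/2-1\}$), symmetric about $0$, such that (1) $\hat G_f\in[0,1]$ for all $f$; (2) $\hat G_f\ge1-(1/4)^{F-1}$ whenever $|f|\le n/(2B)$; (3) $\hat G_f\le(1/4)^{F-1}\bigl(\frac{n}{B|f|}\bigr)^{F-1}$ whenever $|f|\ge n/B$. For $\sigma,b\in[n]$: $\pi_{\sigma,b}(f)=\sigma(f-b)\bmod n$; $h_{\sigma,b}(f)=\lfloor (B/n)\pi_{\sigma,b}(f)+1/2\rfloor$; $o_{f,\sigma,b}(f')=\pi_{\sigma,b}(f')-(n/B)h_{\sigma,b}(f)\bmod n$. *)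

From Stdlib Require Import Reals ZArith List Lia Lra.
Open Scope R_scope.

(* Elements of Z_n are represented by integers f with 0 <= f < n. *)

(* the representative of f in {-n/2, ..., n/2 - 1} *)
Definition zrep (n f : Z) : Z :=
  if (f <? n / 2)%Z then f else (f - n)%Z.

Definition zabs_n (n f : Z) : Z := Z.abs (zrep n f).

Definition is_pow2 (m : nat) : Prop := exists k : nat, m = (2 ^ k)%nat.

Definition flat_filter (n B F : nat) (G : Z -> R) : Prop :=
  let nZ := Z.of_nat n in
  let eps := (/4) ^ (F - 1) in
  (forall f, (0 <= f < nZ)%Z -> G f = G ((- f) mod nZ)%Z) /\
  (forall f, (0 <= f < nZ)%Z -> 0 <= G f <= 1) /\
  (forall f, (0 <= f < nZ)%Z ->
     IZR (zabs_n nZ f) <= INR n / (2 * INR B) -> G f >= 1 - eps) /\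
  (forall f, (0 <= f < nZ)%Z ->
     IZR (zabs_n nZ f) >= INR n / INR B ->
     G f <= eps * (INR n / (INR B * IZR (zabs_n nZ f))) ^ (F - 1)).

Definition pi_sb (n sigma b f : Z) : Z := (sigma * (f - b)) mod n.

(* h_{sigma,b}(f) = floor((B/n) pi(f) + 1/2) = floor((2 B pi(f) + n) / (2 n)) *)
Definition h_sb (n B sigma b f : Z) : Z :=
  ((2 * B * pi_sb n sigma b f + n) / (2 * n))%Z.

(* o_{f,sigma,b}(f') = pi(f') - (n/B) h(f) mod n  (n/B is an integer) *)
Definition o_sb (n B f sigma b f' : Z) : Z :=
  (pi_sb n sigma b f' - (n / B) * h_sb n B sigma b f) mod n.

Definition sumR (l : list nat) (g : nat -> R) : R :=
  fold_right Rplus 0 (map g l).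

Definition odds (n : nat) : list nat := filter Nat.odd (seq 0 n).

(* E over sigma uniform among odd elements of [n] and b uniform in [n] *)
Definition expect_sb (n : nat) (X : Z -> Z -> R) : R :=
  / (INR (length (odds n)) * INR n) *
  sumR (odds n) (fun s => sumR (seq 0 n) (fun b => X (Z.of_nat s) (Z.of_nat b))).

(* Write f' - f = 2^s u with u odd, n = 2^k and m = n/B = 2^j.  Modulo n,
   o_{f,sigma,b}(f') = sigma (f' - f) + r, where r = pi(f) - m h(f) is the offset of pi(f)
   from the centre of its bucket, so |r| <= m/2.  Outside the window |o| < m the filter is at
   most eps, hence exp(lam G_o) <= e^(lam eps) (1 + (e^(lam (1 - eps)) - 1) [|o| < m]), and it
   suffices to show that at most a fraction 2/B of the pairs (sigma, b) land in the window.
   For odd sigma, b |-> pi(f) permutes Z_n, so we may fix pi(f), i.e. fix r, and count sigma.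
   Since o - r is an odd multiple of 2^s, o lies in a fixed class modulo 2^(s+1): no such o is
   in the window if s > j, and at most 2^(j-s) are otherwise.  As o determines sigma modulo
   2^(k-s), each o leaves 2^s choices of sigma, so at most m of the n/2 odd sigma qualify. *)

From Stdlib Require Import Reals ZArith List Lia Lra Znumtheory Zpow_facts.

Open Scope Z_scope.

Lemma Z_pow2_odd_decomp (d : Z) :
  d <> 0 -> exists s u, 0 <= s /\ Z.odd u = true /\ d = 2 ^ s * u.
Proof.
  assert (Hpos : forall p : positive,
             exists s u, 0 <= s /\ Z.odd u = true /\ Z.pos p = 2 ^ s * u).
  { induction p as [p _ | p [s [u [Hs [Hu Hp]]]] |].
    - exists 0, (Z.pos p~1). split; [lia | split; [reflexivity | ring]].
    - exists (s + 1), u. rewrite Pos2Z.inj_xO, Hp, Z.pow_add_r by lia.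
      split; [lia | split; [exact Hu | ring]].
    - exists 0, 1. split; [lia | split; reflexivity]. }
  intros Hd. destruct d as [| p | p]; [contradiction | apply Hpos |].
  destruct (Hpos p) as [s [u [Hs [Hu Hp]]]].
  exists s, (- u). rewrite Z.odd_opp, <- Pos2Z.opp_pos, Hp. split; [lia | split; [exact Hu | ring]].
Qed.

Lemma pow2_odd_exponent_lt (k s u : Z) :
  0 <= s -> Z.odd u = true -> Z.abs (2 ^ s * u) < 2 ^ k -> s < k.
Proof.
  intros Hs Hu Hlt. destruct (Z.lt_ge_cases s k) as [| Hks]; [assumption | exfalso].
  pose proof (Z.pow_le_mono_r 2 k s ltac:(lia) Hks).
  pose proof (Z.pow_pos_nonneg 2 s ltac:(lia) Hs).
  assert (u <> 0) by (intros ->; discriminate).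
  nia.
Qed.

Lemma Zpow2_divide_odd_mul (e u x : Z) :
  0 <= e -> Z.odd u = true -> (2 ^ e | u * x) -> (2 ^ e | x).
Proof.
  intros He Hu Hdiv. apply (Gauss _ u _ Hdiv).
  apply rel_prime_sym, rel_prime_Zpower_r; [exact He |].
  apply rel_prime_sym, Zgcd_1_rel_prime.
  rewrite <- Z.gcd_mod, Zmod_odd, Hu by lia. reflexivity.
Qed.

Lemma Zpow2_divide_odd_multiple (k s u x : Z) :
  0 <= s <= k -> Z.odd u = true -> (2 ^ k | x * (2 ^ s * u)) -> (2 ^ (k - s) | x).
Proof.
  intros Hs Hu Hdiv. apply (Zpow2_divide_odd_mul _ u); [lia | exact Hu |].
  apply (Z.mul_divide_cancel_l _ _ (2 ^ s)); [apply Z.pow_nonzero; lia |].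
  rewrite <- Z.pow_add_r, Z.add_sub_assoc, Z.add_simpl_l by lia.
  replace (2 ^ s * (u * x)) with (x * (2 ^ s * u)) by ring. exact Hdiv.
Qed.

Lemma Zmod_eq_divide (n a b : Z) : 0 < n -> a mod n = b mod n -> (n | a - b).
Proof.
  intros Hn Hab. apply Z.mod_divide; [lia |].
  rewrite Zminus_mod, Hab, Z.sub_diag. reflexivity.
Qed.

Lemma Zdiv_eq_divide_eq (q x y : Z) : 0 < q -> (q | x - y) -> x / q = y / q -> x = y.
Proof.
  intros Hq [c Hc] Hxy.
  pose proof (Z.div_mod x q ltac:(lia)). pose proof (Z.div_mod y q ltac:(lia)).
  pose proof (Z.mod_pos_bound x q Hq). pose proof (Z.mod_pos_bound y q Hq).
  assert (c = 0) by nia. lia.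
Qed.

Lemma zrep_congr (n v : Z) : 0 < n -> (n | v - zrep n (v mod n)).
Proof.
  intros Hn. unfold zrep. rewrite Z.mod_eq by lia.
  destruct (_ <? _); [exists (v / n) | exists (v / n + 1)]; ring.
Qed.

Lemma is_pow2_Z (n : nat) : is_pow2 n -> exists k, 0 <= k /\ Z.of_nat n = 2 ^ k.
Proof.
  intros [a ->]. exists (Z.of_nat a). rewrite Nat2Z.inj_pow. split; [lia | reflexivity].
Qed.

Lemma is_pow2_divide (n B : nat) :
  is_pow2 n -> is_pow2 B -> (B <= n)%nat -> exists m, n = (B * m)%nat /\ is_pow2 m.
Proof.
  intros [a ->] [c ->] Hca. apply Nat.pow_le_mono_r_iff in Hca; [| lia].
  exists (2 ^ (a - c))%nat. split; [| now exists (a - c)%nat].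
  rewrite <- Nat.pow_add_r. f_equal. lia.
Qed.

Definition near_zero (n m v : Z) : bool := Z.abs (zrep n (v mod n)) <? m.

Lemma NoDup_length_le_inj {A B : Type} (l : list A) (l' : list B) (g : A -> B) :
  NoDup l -> (forall x, In x l -> In (g x) l') ->
  (forall x y, In x l -> In y l -> g x = g y -> x = y) -> (length l <= length l')%nat.
Proof.
  intros Hl Hg Hinj. rewrite <- (length_map g l).
  apply NoDup_incl_length; [now apply NoDup_map_NoDup_ForallPairs |].
  intros y Hy. apply in_map_iff in Hy as [x [<- Hx]]. auto.
Qed.

Lemma In_odds (n x : nat) : In x (odds n) <-> Nat.odd x = true /\ (x < n)%nat.
Proof. unfold odds. rewrite filter_In, in_seq. intuition lia. Qed.

Lemma length_odds_double (t : nat) : length (odds (2 * t)) = t.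
Proof.
  induction t as [| t IHt]; [reflexivity |].
  unfold odds in *. replace (2 * S t)%nat with (2 * t + 2)%nat by lia.
  rewrite seq_app, filter_app, length_app, IHt. cbn.
  replace (t + (t + 0))%nat with (2 * t)%nat by lia.
  rewrite Nat.odd_even, Nat.odd_succ, Nat.even_mul. simpl. lia.
Qed.

Lemma Zodd_of_nat (x : nat) : Nat.odd x = true -> Z.odd (Z.of_nat x) = true.
Proof.
  intros Hx. apply Nat.odd_spec in Hx as [t ->].
  rewrite Nat2Z.inj_add, Nat2Z.inj_mul. apply Z.odd_odd.
Qed.

Section OddMultiplesNearZero.

Variables (k s u r : Z).
Hypotheses (Hs : 0 <= s < k) (Hu : Z.odd u = true).

Lemma zrep_odd_multiple_residue (x : Z) :
  Z.odd x = true ->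
  (2 ^ (s + 1) | zrep (2 ^ k) ((x * (2 ^ s * u) + r) mod 2 ^ k) - r - 2 ^ s).
Proof.
  intros Hx. set (z := zrep _ _).
  assert (Hcongr : (2 ^ (s + 1) | x * (2 ^ s * u) + r - z)).
  { apply (Z.divide_trans _ (2 ^ k)); [| apply zrep_congr, Z.pow_pos_nonneg; lia].
    exists (2 ^ (k - (s + 1))). rewrite <- Z.pow_add_r by lia. f_equal. ring. }
  assert (Hmul : (2 ^ (s + 1) | x * (2 ^ s * u) - 2 ^ s)).
  { apply Z.odd_spec in Hx as [t ->]. apply Z.odd_spec in Hu as [v ->].
    exists (2 * t * v + t + v). rewrite Z.pow_add_r by lia. ring. }
  replace (z - r - 2 ^ s) with (x * (2 ^ s * u) - 2 ^ s - (x * (2 ^ s * u) + r - z)) by ring.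
  now apply Z.divide_sub_r.
Qed.

Lemma odd_multiple_near_zero_inj (x y c : Z) :
  Z.odd x = true -> Z.odd y = true -> x / 2 ^ (k - s) = y / 2 ^ (k - s) ->
  (zrep (2 ^ k) ((x * (2 ^ s * u) + r) mod 2 ^ k) + c) / 2 ^ (s + 1) =
  (zrep (2 ^ k) ((y * (2 ^ s * u) + r) mod 2 ^ k) + c) / 2 ^ (s + 1) ->
  x = y.
Proof.
  intros Hx Hy Hhigh Hlow.
  pose proof (zrep_odd_multiple_residue x Hx) as Hrx.
  pose proof (zrep_odd_multiple_residue y Hy) as Hry.
  set (zx := zrep _ ((x * _ + r) mod _)) in *. set (zy := zrep _ ((y * _ + r) mod _)) in *.
  assert (Hz : zx = zy).
  { enough (zx + c = zy + c) by lia.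
    apply (Zdiv_eq_divide_eq (2 ^ (s + 1))); [apply Z.pow_pos_nonneg; lia | | exact Hlow].
    replace (zx + c - (zy + c)) with (zx - r - 2 ^ s - (zy - r - 2 ^ s)) by ring.
    now apply Z.divide_sub_r. }
  assert (Hdiff : (2 ^ k | (x - y) * (2 ^ s * u))).
  { replace ((x - y) * (2 ^ s * u))
      with (x * (2 ^ s * u) + r - zx - (y * (2 ^ s * u) + r - zy)) by (rewrite Hz; ring).
    apply Z.divide_sub_r; apply zrep_congr, Z.pow_pos_nonneg; lia. }
  apply (Zdiv_eq_divide_eq (2 ^ (k - s))); [apply Z.pow_pos_nonneg; lia | | exact Hhigh].
  apply (Zpow2_divide_odd_multiple k s u); [lia | exact Hu | exact Hdiff].
Qed.

Variable j : Z.
Hypotheses (Hj : 0 <= j) (Hr : - 2 ^ j <= 2 * r < 2 ^ j).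

Lemma odd_multiple_not_near_zero (x : Z) :
  j < s -> Z.odd x = true ->
  ~ Z.abs (zrep (2 ^ k) ((x * (2 ^ s * u) + r) mod 2 ^ k)) < 2 ^ j.
Proof.
  intros Hjs Hx Hnear.
  destruct (zrep_odd_multiple_residue x Hx) as [h Hh].
  set (z := zrep _ _) in *.
  assert (HS : 2 ^ (s + 1) = 2 * 2 ^ s) by (rewrite Z.pow_add_r; lia).
  assert (HjS : 2 * 2 ^ j <= 2 ^ s).
  { replace s with (j + 1 + (s - j - 1)) by ring.
    rewrite !Z.pow_add_r by lia.
    pose proof (Z.pow_pos_nonneg 2 (s - j - 1) ltac:(lia) ltac:(lia)). nia. }
  (* z - r = (2h + 1) 2^s has size >= 2^(j+1), too large for |z| < 2^j, |r| <= 2^j / 2 *)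
  destruct (Z.le_gt_cases 0 h); nia.
Qed.

End OddMultiplesNearZero.

Lemma odds_near_zero_count (n m : nat) (k j s u r : Z) :
  Z.of_nat n = 2 ^ k -> Z.of_nat m = 2 ^ j -> 0 <= j -> 0 <= s < k -> Z.odd u = true ->
  - 2 ^ j <= 2 * r < 2 ^ j ->
  (length (filter (fun x => near_zero (Z.of_nat n) (Z.of_nat m) (Z.of_nat x * (2 ^ s * u) + r))
             (odds n)) <= m)%nat.
Proof.
  intros Hn Hm Hj Hs Hu Hr. unfold near_zero. rewrite Hn, Hm.
  set (z x := zrep (2 ^ k) ((Z.of_nat x * (2 ^ s * u) + r) mod 2 ^ k)).
  assert (Hnear : forall x, In x (filter (fun x => Z.abs (z x) <? 2 ^ j) (odds n)) ->
             Z.odd (Z.of_nat x) = true /\ 0 <= Z.of_nat x < 2 ^ k /\ Z.abs (z x) < 2 ^ j).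
  { intros x Hx. apply filter_In in Hx as [Hx Hzx]. apply In_odds in Hx as [Hodd Hlt].
    split; [now apply Zodd_of_nat | split; [lia | now apply Z.ltb_lt]]. }
  destruct (Z.le_gt_cases s j) as [Hsj | Hjs].
  - (* x is determined by its high bits x / 2^(k-s) and by z x, which lies in one residue class mod 2^(s+1) *)
    set (g x := (Z.to_nat (Z.of_nat x / 2 ^ (k - s)), Z.to_nat ((z x + 2 ^ j) / 2 ^ (s + 1)))).
    transitivity (length (list_prod (seq 0 (Z.to_nat (2 ^ s))) (seq 0 (Z.to_nat (2 ^ (j - s)))))).
    + apply (NoDup_length_le_inj _ _ g).
      * apply NoDup_filter, NoDup_filter, seq_NoDup.
      * intros x Hx. destruct (Hnear x Hx) as [_ [Hxk Hzx]].
        assert (Hk : 2 ^ k = 2 ^ (k - s) * 2 ^ s) by (rewrite <- Z.pow_add_r by lia; f_equal; ring).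
        assert (Hj' : 2 * 2 ^ j = 2 ^ (j - s) * 2 ^ (s + 1)) by
          (rewrite <- Z.pow_add_r, <- Z.pow_succ_r by lia; f_equal; ring).
        pose proof (Z.pow_pos_nonneg 2 (k - s) ltac:(lia) ltac:(lia)).
        pose proof (Z.pow_pos_nonneg 2 (s + 1) ltac:(lia) ltac:(lia)).
        apply in_prod; apply in_seq; split; try lia.
        -- apply Z2Nat.inj_lt; [apply Z.div_pos | | apply Z.div_lt_upper_bound]; lia.
        -- apply Z2Nat.inj_lt; [apply Z.div_pos | | apply Z.div_lt_upper_bound]; lia.
      * intros x y Hx Hy Hg. injection Hg as Hhigh Hlow.
        destruct (Hnear x Hx) as [Hox [Hxk Hzx]], (Hnear y Hy) as [Hoy [Hyk Hzy]].
        apply Nat2Z.inj, (odd_multiple_near_zero_inj k s u r Hs Hu _ _ (2 ^ j) Hox Hoy).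
        -- apply Z2Nat.inj in Hhigh; [exact Hhigh | |]; apply Z.div_pos; lia.
        -- apply Z2Nat.inj in Hlow; [exact Hlow | |]; apply Z.div_pos; lia.
    + rewrite length_prod, !length_seq, <- Z2Nat.inj_mul, <- Z.pow_add_r by lia.
      rewrite Z.add_sub_assoc, Z.add_simpl_l, <- Hm, Nat2Z.id. lia.
  - destruct (filter _ (odds n)) as [| x l] eqn:Hfilter; [simpl; lia |].
    destruct (Hnear x (or_introl eq_refl)) as [Hodd [_ Hzx]].
    contradiction (odd_multiple_not_near_zero k s u r Hs Hu j Hj Hr _ Hjs Hodd Hzx).
Qed.

Definition bucket_offset (n B p : Z) : Z := p - n / B * ((2 * B * p + n) / (2 * n)).

Lemma o_sb_eq (n B f sigma b f' : Z) :
  n <> 0 ->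
  o_sb n B f sigma b f' = (sigma * (f' - f) + bucket_offset n B (pi_sb n sigma b f)) mod n.
Proof.
  intros Hn. unfold o_sb, h_sb, bucket_offset.
  rewrite <- (Z.mod_add _ ((sigma * (f' - b)) / n - (sigma * (f - b)) / n) n Hn).
  f_equal. unfold pi_sb. rewrite !Z.mod_eq by exact Hn. ring.
Qed.

Lemma bucket_offset_bound (B m p : Z) :
  0 < B -> 0 < m -> - m <= 2 * bucket_offset (B * m) B p < m.
Proof.
  intros HB Hm. unfold bucket_offset.
  replace ((B * m) / B) with m by (apply Z.div_unique_exact; lia).
  replace (2 * B * p + B * m) with (B * (2 * p + m)) by ring.
  replace (2 * (B * m)) with (B * (2 * m)) by ring.
  rewrite Z.div_mul_cancel_l by lia.
  pose proof (Z.div_mod (2 * p + m) (2 * m) ltac:(lia)).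
  pose proof (Z.mod_pos_bound (2 * p + m) (2 * m) ltac:(lia)).
  lia.
Qed.

Lemma pi_sb_inj (k sigma f b1 b2 : Z) :
  0 <= k -> Z.odd sigma = true -> 0 <= b1 < 2 ^ k -> 0 <= b2 < 2 ^ k ->
  pi_sb (2 ^ k) sigma b1 f = pi_sb (2 ^ k) sigma b2 f -> b1 = b2.
Proof.
  intros Hk Hsigma Hb1 Hb2 Hpi.
  apply Zmod_eq_divide in Hpi; [| apply Z.pow_pos_nonneg; lia].
  replace (sigma * (f - b1) - sigma * (f - b2)) with (sigma * (b2 - b1)) in Hpi by ring.
  apply Zpow2_divide_odd_mul in Hpi; [| exact Hk | exact Hsigma].
  symmetry. apply (Zdiv_eq_divide_eq (2 ^ k)); [lia | exact Hpi |].
  rewrite !Z.div_small; lia.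
Qed.

Open Scope R_scope.

Lemma sumR_le (l : list nat) (g h : nat -> R) :
  (forall x, In x l -> g x <= h x) -> sumR l g <= sumR l h.
Proof.
  induction l as [| a l IHl]; intros Hgh; unfold sumR; simpl; [lra |].
  apply Rplus_le_compat; [apply Hgh; left; reflexivity | apply IHl; intros; apply Hgh; right; auto].
Qed.

Lemma sumR_plus (l : list nat) (g h : nat -> R) :
  sumR l (fun x => g x + h x) = sumR l g + sumR l h.
Proof. induction l as [| a l IHl]; unfold sumR in *; simpl; [ring | rewrite IHl; ring]. Qed.

Lemma sumR_const (l : list nat) (c : R) : sumR l (fun _ => c) = c * INR (length l).
Proof.
  induction l as [| x l IHl]; unfold sumR in *; cbn [map fold_right length]; [simpl; ring |].
  rewrite IHl, S_INR. ring.
Qed.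

Lemma sumR_affine (l : list nat) (a b : R) (g : nat -> R) :
  sumR l (fun x => a + b * g x) = a * INR (length l) + b * sumR l g.
Proof.
  induction l as [| x l IHl]; unfold sumR in *; cbn [map fold_right length]; [simpl; ring |].
  rewrite IHl, S_INR. ring.
Qed.

Lemma sumR_indicator (l : list nat) (P : nat -> bool) :
  sumR l (fun x => if P x then 1 else 0) = INR (length (filter P l)).
Proof.
  induction l as [| x l IHl]; unfold sumR in *; cbn [map fold_right filter]; [reflexivity |].
  rewrite IHl. destruct (P x); cbn [length]; [rewrite S_INR |]; ring.
Qed.

Lemma sumR_comm (l1 l2 : list nat) (g : nat -> nat -> R) :
  sumR l1 (fun x => sumR l2 (fun y => g x y)) = sumR l2 (fun y => sumR l1 (fun x => g x y)).
Proof.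
  induction l1 as [| x l1 IHl1].
  - transitivity (sumR l2 (fun _ => 0)); [| reflexivity].
    rewrite sumR_const. unfold sumR. simpl. ring.
  - unfold sumR at 1. simpl. fold (sumR l1 (fun x => sumR l2 (fun y => g x y))).
    rewrite IHl1, <- sumR_plus. reflexivity.
Qed.

Lemma exp_le_exp_of_le (x y : R) : x <= y -> exp x <= exp y.
Proof.
  intros [Hlt | ->]; [left; now apply exp_increasing | right; reflexivity].
Qed.

Lemma exp_sub_one_nonneg (x : R) : 0 <= x -> 0 <= exp x - 1.
Proof. intros Hx. pose proof (exp_le_exp_of_le 0 x Hx). rewrite exp_0 in *. lra. Qed.

Lemma pow_le_one (x : R) (k : nat) : 0 <= x <= 1 -> x ^ k <= 1.
Proof. intros Hx. rewrite <- (pow1 k). now apply pow_incr. Qed.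

Lemma exp_le_window (lam g eps : R) (near : bool) :
  0 <= lam -> g <= 1 -> (near = false -> g <= eps) ->
  exp (lam * g) <=
  exp (lam * eps) + exp (lam * eps) * (exp (lam * (1 - eps)) - 1) * (if near then 1 else 0).
Proof.
  intros Hlam Hg Hfar. destruct near.
  - replace (exp (lam * eps) + exp (lam * eps) * (exp (lam * (1 - eps)) - 1) * 1)
      with (exp (lam * eps + lam * (1 - eps))) by (rewrite exp_plus; ring).
    apply exp_le_exp_of_le. nra.
  - rewrite Rmult_0_r, Rplus_0_r. apply exp_le_exp_of_le. specialize (Hfar eq_refl). nra.
Qed.

Lemma flat_filter_le_eps (n B F m : nat) (G : Z -> R) (o : Z) :
  flat_filter n B F G -> n = (B * m)%nat -> (0 <= o < Z.of_nat n)%Z ->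
  (Z.of_nat m <= zabs_n (Z.of_nat n) o)%Z -> G o <= (/ 4) ^ (F - 1).
Proof.
  intros [_ [_ [_ Hdecay]]] Hnm Ho Hfar.
  assert (HB : 0 < INR B) by (apply lt_0_INR; destruct B; lia).
  assert (Hm : 0 < INR m) by (apply lt_0_INR; destruct m; lia).
  apply IZR_le in Hfar. rewrite <- INR_IZR_INZ in Hfar.
  set (z := IZR (zabs_n (Z.of_nat n) o)) in *.
  assert (Hratio : INR n / INR B = INR m) by (rewrite Hnm, mult_INR; field; lra).
  assert (Hcond : z >= INR n / INR B) by lra.
  specialize (Hdecay o Ho Hcond). fold z in Hdecay.
  assert (Hx : 0 <= INR n / (INR B * z) <= 1).
  { assert (Hn : INR n = INR B * INR m) by (rewrite Hnm; apply mult_INR).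
    assert (HBz : 0 < INR B * z) by nra.
    split; apply (Rmult_le_reg_r (INR B * z)); try exact HBz;
      unfold Rdiv; rewrite Rmult_assoc, Rinv_l by lra; nra. }
  pose proof (pow_le_one _ (F - 1) Hx) as Hpow.
  assert (Heps : 0 <= (/ 4) ^ (F - 1)) by (apply pow_le; lra).
  nra.
Qed.

Lemma near_zero_pairs_count (n B m : nat) (k j s u f : Z) :
  Z.of_nat n = (2 ^ k)%Z -> Z.of_nat m = (2 ^ j)%Z -> (0 <= j)%Z -> (0 <= s < k)%Z ->
  Z.odd u = true -> n = (B * m)%nat -> (0 < B)%nat ->
  sumR (odds n) (fun sigma => sumR (seq 0 n) (fun b =>
    if near_zero (Z.of_nat n) (Z.of_nat m)
         (Z.of_nat sigma * (2 ^ s * u) +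
          bucket_offset (Z.of_nat n) (Z.of_nat B) (pi_sb (Z.of_nat n) (Z.of_nat sigma) (Z.of_nat b) f))
    then 1 else 0))
  <= INR n * INR m.
Proof.
  intros Hn Hm Hj Hs Hu Hnm HB.
  set (near sigma p := near_zero (Z.of_nat n) (Z.of_nat m)
         (Z.of_nat sigma * (2 ^ s * u) + bucket_offset (Z.of_nat n) (Z.of_nat B) (Z.of_nat p))).
  (* for odd sigma, b |-> pi(f) permutes [n], so one may count pairs (sigma, pi(f)) instead *)
  apply Rle_trans with
    (sumR (odds n) (fun sigma => sumR (seq 0 n) (fun p => if near sigma p then 1 else 0))).
  - apply sumR_le. intros sigma Hsigma. rewrite !sumR_indicator. apply le_INR.
    apply In_odds in Hsigma as [Hodd _]. apply Zodd_of_nat in Hodd.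
    assert (Hpi : forall b, (0 <= pi_sb (Z.of_nat n) (Z.of_nat sigma) b f < Z.of_nat n)%Z)
      by (intros b; apply Z.mod_pos_bound; lia).
    apply (NoDup_length_le_inj _ _ (fun b => Z.to_nat (pi_sb (Z.of_nat n) (Z.of_nat sigma) (Z.of_nat b) f))).
    + apply NoDup_filter, seq_NoDup.
    + intros b Hb. apply filter_In in Hb as [_ Hnear]. specialize (Hpi (Z.of_nat b)).
      apply filter_In. split; [apply in_seq; lia |]. unfold near. now rewrite Z2Nat.id by lia.
    + intros b1 b2 Hb1 Hb2 Heq.
      apply filter_In in Hb1 as [Hb1 _], Hb2 as [Hb2 _]. apply in_seq in Hb1, Hb2.
      apply Z2Nat.inj in Heq; [| apply Hpi | apply Hpi].
      rewrite Hn in Heq. apply Nat2Z.inj, (pi_sb_inj k (Z.of_nat sigma) f); try lia; assumption.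
  - rewrite sumR_comm.
    apply Rle_trans with (sumR (seq 0 n) (fun _ => INR m)).
    + apply sumR_le. intros p _. rewrite sumR_indicator. apply le_INR.
      apply (odds_near_zero_count n m k j s u); try assumption.
      rewrite <- Hm. replace (Z.of_nat n) with (Z.of_nat B * Z.of_nat m)%Z by (rewrite Hnm; lia).
      apply bucket_offset_bound; lia.
    + rewrite sumR_const, length_seq. lra.
Qed.

Lemma expect_sb_le_window (n : nat) (X : Z -> Z -> R) (near : nat -> nat -> bool) (c a q : R) :
  (0 < length (odds n))%nat -> 0 <= a ->
  (forall sigma b, In sigma (odds n) -> In b (seq 0 n) ->
     X (Z.of_nat sigma) (Z.of_nat b) <= c + a * (if near sigma b then 1 else 0)) ->
  sumR (odds n) (fun sigma => sumR (seq 0 n) (fun b => if near sigma b then 1 else 0)) <= q ->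
  expect_sb n X <= c + a * (q / (INR (length (odds n)) * INR n)).
Proof.
  intros Hodds Ha HX Hq. unfold expect_sb.
  assert (HL : 0 < INR (length (odds n))) by (apply lt_0_INR; exact Hodds).
  assert (Hn : 0 < INR n).
  { apply lt_0_INR. pose proof (filter_length_le Nat.odd (seq 0 n)) as Hle.
    unfold odds in Hodds. rewrite length_seq in Hle. lia. }
  assert (Hsum : sumR (odds n) (fun sigma => sumR (seq 0 n) (fun b => X (Z.of_nat sigma) (Z.of_nat b)))
                 <= c * INR n * INR (length (odds n)) + a * q).
  { apply Rle_trans with (sumR (odds n) (fun sigma =>
      c * INR n + a * sumR (seq 0 n) (fun b => if near sigma b then 1 else 0))).
    - apply sumR_le. intros sigma Hsigma.
      replace (c * INR n) with (c * INR (length (seq 0 n))) by now rewrite length_seq.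
      rewrite <- sumR_affine. apply sumR_le. intros b Hb. now apply HX.
    - rewrite sumR_affine. apply Rplus_le_compat_l, Rmult_le_compat_l; assumption. }
  apply Rle_trans with (/ (INR (length (odds n)) * INR n) * (c * INR n * INR (length (odds n)) + a * q)).
  - apply Rmult_le_compat_l; [left; apply Rinv_0_lt_compat; nra | exact Hsum].
  - right. field. lra.
Qed.

Lemma window_mean_bound (c A b L n m : R) :
  0 < c -> 0 <= A -> 0 < b -> 0 < L -> n = 2 * L -> n = b * m ->
  c + c * A * (n * m / (L * n)) <= c * ((2 / b + 1 / n) * A + 1).
Proof.
  intros Hc HA Hb HL HnL Hnm.
  assert (Hratio : n * m / (L * n) = 2 / b).
  { field_simplify_eq; [| split; lra]. nra. }
  assert (Hextra : 0 <= c * (1 / n * A)).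
  { apply Rmult_le_pos; [lra | apply Rmult_le_pos; [| exact HA]].
    unfold Rdiv. rewrite Rmult_1_l. left. apply Rinv_0_lt_compat. lra. }
  rewrite Hratio. lra.
Qed.

Theorem lemma5p6 (n B F : nat) (G : Z -> R)
  (Hn : is_pow2 n) (HB : is_pow2 B) (HB2 : (2 <= B)%nat) (HBn : (B <= n)%nat)
  (HF2 : (2 <= F)%nat) (HFe : Nat.Even F)
  (HG : flat_filter n B F G)
  (f f' : nat) (Hf : (f < n)%nat) (Hf' : (f' < n)%nat) (Hff : f <> f')
  (lam : R) (Hlam : 0 <= lam) :
  let eps := (/4) ^ (F - 1) in
  expect_sb n (fun sigma b =>
     exp (lam * G (o_sb (Z.of_nat n) (Z.of_nat B) (Z.of_nat f) sigma b (Z.of_nat f'))))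
  <= exp (lam * eps) *
     ((2 / INR B + 1 / INR n) * (exp (lam * (1 - eps)) - 1) + 1).
Proof.
  intros eps.
  destruct (is_pow2_divide n B Hn HB HBn) as [m [Hnm Hm]].
  destruct (is_pow2_divide n 2 Hn (ex_intro _ 1%nat eq_refl) ltac:(lia)) as [N [HnN _]].
  destruct (is_pow2_Z n Hn) as [k [Hk HnZ]], (is_pow2_Z m Hm) as [j [Hj HmZ]].
  destruct (Z_pow2_odd_decomp (Z.of_nat f' - Z.of_nat f) ltac:(lia)) as [s [u [Hs [Hu Hd]]]].
  assert (Hsk : (s < k)%Z) by (apply (pow2_odd_exponent_lt k s u); [exact Hs | exact Hu | lia]).
  assert (HA : 0 <= exp (lam * (1 - eps)) - 1).
  { apply exp_sub_one_nonneg. assert (eps <= 1) by (apply pow_le_one; lra). nra. }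
  assert (HL : length (odds n) = N) by (rewrite HnN; apply length_odds_double).
  eapply Rle_trans.
  { apply (expect_sb_le_window n _ (fun sigma b => near_zero (Z.of_nat n) (Z.of_nat m)
             (Z.of_nat sigma * (2 ^ s * u) + bucket_offset (Z.of_nat n) (Z.of_nat B)
                (pi_sb (Z.of_nat n) (Z.of_nat sigma) (Z.of_nat b) (Z.of_nat f)))))
      with (q := INR n * INR m).
    - rewrite HL. lia.
    - apply Rmult_le_pos; [left; apply exp_pos | exact HA].
    - intros sigma b _ _. apply exp_le_window; [exact Hlam | apply HG, Z.mod_pos_bound; lia |].
      intros Hfar%Z.ltb_ge.
      apply (flat_filter_le_eps n B F m); [exact HG | exact Hnm | apply Z.mod_pos_bound; lia |].
      rewrite o_sb_eq, Hd by lia. exact Hfar.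
    - apply (near_zero_pairs_count n B m k j s u); try assumption; lia. }
  apply window_mean_bound; try apply exp_pos; try exact HA.
  - apply lt_0_INR. lia.
  - rewrite HL. apply lt_0_INR. lia.
  - rewrite HL, HnN, mult_INR. simpl. lra.
  - rewrite Hnm. apply mult_INR.
Qed.
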